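(* Let $h\geq 3$. For each $(r,s)\in\{(0,2),(4,0)\}$ there exists a $(K_2,S(C_h))$-URGDD$(r,s)$ of $C_{h(2)}$.
   Context: For integers $m,n$, $C_{m(n)}$ is the graph with vertex set $X^1\cup\cdots\cup X^m$, where the $X^i$ are pairwise disjoint sets of size $n$, and edge set $\{\{u,w\}: u\in X^i, w\in X^j, |i-j|\equiv 1\pmod m\}$. For $h\geq3$, an $h$-sun is the graph on $2h$ distinct vertices $a_1,\ldots,a_h,b_1,\ldots,b_h$ consisting of the $h$-cycle $(a_1,\ldots,a_h)$ together with the edges $\{a_i,b_i\}$, $i=1,\ldots,h$. A $(K_2,S(C_h))$-URGDD$(r,s)$ of $C_{m(n)}$ is a partition of the edge set of $C_{m(n)}$ into $r$ classes each of which is a perfect matching of $C_{m(n)}$ and $s$ classes each of which is a set of vertex-disjoint $h$-suns (subgraphs of $C_{m(n)}$) covering every vertex exactly once. *)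

From mathcomp Require Import all_boot.
Set Implicit Arguments. Unset Strict Implicit. Unset Printing Implicit Defensive.

(* Vertices of C_{m(n)}: pairs (i, x) with i : 'I_m the index of the part X^i
   and x : 'I_n the position inside X^i. *)
Definition cvert (m n : nat) := ('I_m * 'I_n)%type.

Definition cadj (m n : nat) (u w : cvert m n) : bool :=
  ((u.1 + 1) %% m == w.1) || ((w.1 + 1) %% m == u.1).

Definition Cmn_edges (m n : nat) : {set {set cvert m n}} :=
  [set [set u; w] | u in [set: cvert m n], w in [set: cvert m n] & cadj u w].

Section Factors.
Variable V : finType.

Definition perfect_matching (M : {set {set V}}) : Prop :=
  (forall e, e \in M -> #|e| = 2) /\
  (forall v : V, #|[set e in M | v \in e]| = 1).

(* an h-sun given by a_0..a_{h-1} (cycle) and pendant vertices b_0..b_{h-1} *)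
Definition sun_ok (h : nat) (s : ('I_h -> V) * ('I_h -> V)) : Prop :=
  injective s.1 /\ injective s.2 /\ (forall i j, s.1 i != s.2 j).

Definition sun_vertices (h : nat) (s : ('I_h -> V) * ('I_h -> V)) : {set V} :=
  [set s.1 i | i : 'I_h] :|: [set s.2 i | i : 'I_h].

Definition sun_edges (h : nat) (s : ('I_h -> V) * ('I_h -> V)) : {set {set V}} :=
  [set [set s.1 i; s.1 (ordS i)] | i : 'I_h] :|: [set [set s.1 i; s.2 i] | i : 'I_h].

Definition sun_factor (h : nat) (F : {set {set V}}) : Prop :=
  exists (k : nat) (S : 'I_k -> ('I_h -> V) * ('I_h -> V)),
    (forall t, sun_ok (S t)) /\
    (forall v : V, #|[set t | v \in sun_vertices (S t)]| = 1) /\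
    F = \bigcup_(t < k) sun_edges (S t).
End Factors.

(* A (K_2, S(C_h))-URGDD(r,s) of C_{m(n)}: a colouring c of the edges with
   r + s colours (= partition of the edge set into r + s classes) such that the
   first r classes are perfect matchings and the last s are h-sun factors. *)
Definition urgdd (h r s m n : nat) : Prop :=
  exists c : {set cvert m n} -> 'I_(r + s),
    (forall i : 'I_r,
        perfect_matching [set e in Cmn_edges m n | c e == lshift s i]) /\
    (forall j : 'I_s,
        sun_factor h [set e in Cmn_edges m n | c e == rshift r j]).

From mathcomp Require Import all_boot.
Set Implicit Arguments. Unset Strict Implicit. Unset Printing Implicit Defensive.

(* Every edge of C_{h(2)} is (i, x)(i + 1, y) for a unique column i and layers
   x, y.  Colouring it by x gives two classes, each one h-sun: the h-cycle on
   layer x with a pendant edge from (i, x) to (i + 1, 1 - x).  For the four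
   perfect matchings, the four edges between columns i and i + 1 get distinct
   colours according to one of four patterns (types); the colours at a vertex
   are all distinct iff the types of consecutive columns are compatible, and the
   compatibility digraph contains a 2-cycle and a 3-cycle through a common type,
   hence closed walks of every length h >= 2, which assign types to the h
   columns around the cycle. *)

Lemma count_eq1P (T : eqType) (P : pred T) (s : seq T) : count P s = 1 ->
  exists2 p, P p && (p \in s) & forall q, P q -> q \in s -> q = p.
Proof.
rewrite -size_filter; case E: (filter P s) => [|p [|]] // _.
have mem_filt q : (q \in filter P s) = P q && (q \in s) by rewrite mem_filter.
exists p => [|q Pq qs]; first by rewrite -mem_filt E mem_seq1.
by apply/eqP; rewrite -mem_seq1 -E mem_filt Pq.
Qed.

Lemma val_iter_ordS h (i : 'I_h) k : val (iter k (@ordS h) i) = (i + k) %% h.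
Proof.
elim: k => [|k IHk]; first by rewrite addn0 modn_small.
by rewrite iterS /= IHk -addn1 modnDml addn1 addnS.
Qed.

Lemma iter_ordS_neq h (i : 'I_h) k : 0 < k < h -> iter k (@ordS h) i != i.
Proof.
case/andP=> k_gt0 k_lt_h; rewrite -val_eqE /= val_iter_ordS.
rewrite -{2}(modn_small (ltn_ord i)) -[X in _ == X %% h]addn0 eqn_modDl.
by rewrite mod0n modn_small // -lt0n.
Qed.

Section Graph.
Variables h n : nat.
Implicit Types (u v : cvert h n) (y : 'I_n).

Definition fwd u y : cvert h n := (ordS u.1, y).
Definition fedge u y : {set cvert h n} := [set u; fwd u y].

Lemma cadjE u v : cadj u v = (v.1 == ordS u.1) || (u.1 == ordS v.1).
Proof.
by rewrite /cadj !addn1 -!val_eqE /= ![_ == _.+1 %% h]eq_sym.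
Qed.

Lemma fedge_Cmn u y : fedge u y \in Cmn_edges h n.
Proof. by apply/imset2P; exists u (fwd u y); rewrite ?inE //= cadjE eqxx. Qed.

Lemma Cmn_edgesP e : e \in Cmn_edges h n -> exists u y, e = fedge u y.
Proof.
case/imset2P=> u v _; rewrite !inE /= cadjE => /orP[] /eqP v1E ->.
  by exists u, v.2; rewrite /fedge /fwd -v1E -surjective_pairing.
by exists v, u.2; rewrite /fedge /fwd -v1E -surjective_pairing setUC.
Qed.

Lemma fwd_neq u y : 1 < h -> fwd u y != u.
Proof.
by move=> h_gt1; apply/eqP => /(congr1 fst) /eqP; apply/negP/(@iter_ordS_neq h u.1 1).
Qed.

Hypothesis h_gt2 : 2 < h.

Lemma fedge_inj u u' y y' : fedge u y = fedge u' y' -> (u, y) = (u', y').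
Proof.
move=> E; have h_gt1 := ltnW h_gt2.
have : u \in fedge u' y' by rewrite -E setU11.
rewrite !inE => /orP[/eqP uE | /eqP uE].
  subst u'; have : fwd u y \in fedge u y' by rewrite -E !inE eqxx orbT.
  rewrite !inE => /orP[/eqP fwdE | /eqP [-> //]].
  by have := fwd_neq u y h_gt1; rewrite fwdE eqxx.
have : u' \in fedge u y by rewrite E setU11.
rewrite !inE => /orP[/eqP u'E | /eqP u'E].
  by have := fwd_neq u' y' h_gt1; rewrite -uE u'E eqxx.
have := @iter_ordS_neq h u.1 2 h_gt2.
by rewrite {2}uE u'E eqxx.
Qed.

Variables (K : finType) (k0 : K) (col : cvert h n -> 'I_n -> K).

(* An edge is named by its left end u and the layer y of its right end; a
   colouring of these names is transported to edge sets. *)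
Definition edge_colour (e : {set cvert h n}) : K :=
  if [pick p | e == fedge p.1 p.2] is Some p then col p.1 p.2 else k0.

Lemma edge_colourE u y : edge_colour (fedge u y) = col u y.
Proof.
rewrite /edge_colour; case: pickP => [p /eqP/fedge_inj [-> ->] //|].
by move/(_ (u, y)); rewrite eqxx.
Qed.

Lemma colour_class_perfect_matching (inc : cvert h n -> seq (cvert h n * 'I_n)) k :
  (forall v q, (v \in fedge q.1 q.2) = (q \in inc v)) ->
  (forall v, count (fun q => col q.1 q.2 == k) (inc v) = 1) ->
  perfect_matching [set e in Cmn_edges h n | edge_colour e == k].
Proof.
move=> incE inc1; split=> [e | v].
  rewrite inE => /andP[/Cmn_edgesP[u [y ->]] _].
  by rewrite cards2 eq_sym fwd_neq // ltnW.
have [p /andP[pk p_inc] p_uniq] := count_eq1P (inc1 v).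
suff -> : [set e in [set e in Cmn_edges h n | edge_colour e == k] | v \in e]
    = [set fedge p.1 p.2] by rewrite cards1.
apply/setP => e; rewrite !inE; apply/idP/eqP => [|->].
  case/andP=> /andP[/Cmn_edgesP[u [y ->]]]; rewrite edge_colourE => uk v_in.
  by rewrite -(p_uniq (u, y)) // -incE.
by rewrite fedge_Cmn edge_colourE pk incE.
Qed.

End Graph.

Lemma ord2P (x : 'I_2) : x = ord0 \/ x = ord_max.
Proof. by case: x => [[|[|]] // x_lt2]; [left | right]; apply: val_inj. Qed.

Lemma ord2_neq_rev (j : 'I_2) : rev_ord j != j.
Proof. by case: (ord2P j) => ->. Qed.

Lemma ord2_neqE (j x : 'I_2) : x != j -> x = rev_ord j.
Proof.
by case: (ord2P j) (ord2P x) => -> [] ->; rewrite ?eqxx // => _; apply: val_inj.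
Qed.

Section TwoPoints.
Variable h : nat.
Implicit Types v : cvert h 2.

Definition incident v : seq (cvert h 2 * 'I_2) :=
  [:: (v, ord0); (v, ord_max);
      ((ord_pred v.1, ord0), v.2); ((ord_pred v.1, ord_max), v.2)].

Lemma mem_incident v q : (v \in fedge q.1 q.2) = (q \in incident v).
Proof.
case: q v => [[a b] y] [c d]; rewrite !inE /fwd !xpair_eqE /=.
rewrite [c == ordS a]eq_sym (can2_eq (@ordSK h) (@ord_predK h)).
by case: (ord2P y) (ord2P b) (ord2P d) => -> [] -> [] ->;
  rewrite ?eqxx ?andbT ?andbF /= ?orbF ?[_ == a]eq_sym.
Qed.
End TwoPoints.

(* Row t lists the colours of the edges (i, x)(i + 1, y), for xy = 00, 01, 10, 11,
   when column i has type t. *)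
Definition matching_colour (t x y : nat) : nat :=
  nth 0 (nth [::] [:: [:: 0; 1; 2; 3]; [:: 3; 1; 2; 0];
                      [:: 2; 1; 3; 0]; [:: 3; 1; 0; 2]] t) (2 * x + y).

Definition compatible (p c : nat) : bool :=
  all (fun x => perm_eq [:: matching_colour c x 0; matching_colour c x 1;
                           matching_colour p 0 x; matching_colour p 1 x] (iota 0 4))
      [:: 0; 1].

(* The compatible pairs are 0 -> 1 -> 0 and 0 -> 3 -> 2 -> 0: the types run
   0 1 0 1 ... 0 1 for even h and 0 3 2 0 1 ... 0 1 for odd h. *)
Definition col_type (h i : nat) : nat :=
  if odd h then nth (~~ odd i : nat) [:: 0; 3; 2] i else odd i.

Lemma compatible_col_typeS h i : compatible (col_type h i) (col_type h i.+1).
Proof.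
rewrite /col_type; case: (odd h); case: i => [|[|[|i]]] //=;
by rewrite ?nth_nil; case: (odd i).
Qed.

Lemma col_type_period h : 1 < h -> col_type h h = col_type h 0.
Proof.
by rewrite /col_type; case: h => [|[|[|h]]] //= _; rewrite nth_nil; case: (odd h).
Qed.

Lemma compatible_col_type h (i : 'I_h) :
  1 < h -> compatible (col_type h (ord_pred i)) (col_type h i).
Proof.
move=> h_gt1; case: i => [[|i] lt_ih]; rewrite /ord_pred /=.
  rewrite modn_small ?prednK // -(col_type_period h_gt1).
  by have := compatible_col_typeS h h.-1; rewrite prednK.
by rewrite modnDr modn_small ?compatible_col_typeS // ltnW.
Qed.

Lemma matching_colour_lt4 t (x y : 'I_2) : matching_colour t x y < 4.
Proof.
rewrite /matching_colour; case: (ord2P x) (ord2P y) => -> [] ->;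
by case: t => [|[|[|[|t]]]]; rewrite //= nth_nil.
Qed.

Lemma compatible_count p c (x : 'I_2) (m : 'I_4) : compatible p c ->
  count (pred1 (val m)) [:: matching_colour c x 0; matching_colour c x 1;
                           matching_colour p 0 x; matching_colour p 1 x] = 1.
Proof.
move=> /allP/(_ x); rewrite !inE; case: (ord2P x) => -> /(_ isT) /permP ->;
by rewrite count_uniq_mem ?iota_uniq // mem_iota add0n ltn_ord.
Qed.

Definition matching_col h (u : cvert h 2) (y : 'I_2) : 'I_(4 + 0) :=
  inord (matching_colour (col_type h u.1) u.2 y).

Lemma one_factorization h : 2 < h -> urgdd h 4 0 h 2.
Proof.
move=> h_gt2; exists (edge_colour ord0 (@matching_col h)); split=> [i | []//].
apply: (colour_class_perfect_matching h_gt2 _ (@mem_incident h)) => v.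
have inordE a : a < 4 -> (inord a == lshift 0 i :> 'I_(4 + 0)) = (a == i).
  by move=> a_lt4; rewrite -val_eqE /= inordK.
rewrite /= /matching_col !inordE ?matching_colour_lt4 //.
have := compatible_count v.2 i (compatible_col_type v.1 (ltnW h_gt2)).
by rewrite /= !addn0.
Qed.

Definition layer_col h (u : cvert h 2) (y : 'I_2) : 'I_2 := u.2.

Section LayerSun.
Variables (h : nat) (j : 'I_2).

Definition layer_sun : ('I_h -> cvert h 2) * ('I_h -> cvert h 2) :=
  (fun t => (t, j), fun t => (ordS t, rev_ord j)).

Lemma layer_sun_ok : sun_ok layer_sun.
Proof.
rewrite /sun_ok /=; split; [by move=> a b [] | split].
  by move=> a b /(congr1 fst) /(@ordS_inj h).
by move=> a b; apply/eqP => /(congr1 snd) /eqP; rewrite eq_sym (negbTE (ord2_neq_rev j)).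
Qed.

Lemma layer_sun_vertices : sun_vertices layer_sun = [set: cvert h 2].
Proof.
apply/setP => -[a b]; rewrite !inE; apply/orP.
case: (eqVneq b j) => [-> | /ord2_neqE ->]; [left | right]; apply/imsetP.
  by exists a.
by exists (ord_pred a); rewrite //= ord_predK.
Qed.

Lemma layer_sun_edges : 2 < h ->
  sun_edges layer_sun = [set e in Cmn_edges h 2 | edge_colour ord0 (@layer_col h) e == j].
Proof.
move=> h_gt2; apply/setP => e; rewrite !inE; apply/idP/idP.
  case/orP=> /imsetP[t _ ->].
    by rewrite -[[set _; _]]/(fedge (t, j) j) fedge_Cmn (edge_colourE h_gt2) /=.
  by rewrite -[[set _; _]]/(fedge (t, j) (rev_ord j)) fedge_Cmn (edge_colourE h_gt2) /=.
case/andP=> /Cmn_edgesP[[a b] [y ->]]; rewrite (edge_colourE h_gt2) /layer_col /= => /eqP ->.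
apply/orP; case: (eqVneq y j) => [-> | /ord2_neqE ->]; [left | right];
by apply/imsetP; exists a.
Qed.
End LayerSun.

Lemma layer_sun_factorization h : 2 < h -> urgdd h 0 2 h 2.
Proof.
move=> h_gt2; exists (edge_colour ord0 (@layer_col h)).
split=> [[]// | j]; exists 1, (fun=> layer_sun h j); split; [|split].
- by move=> _; apply: layer_sun_ok.
- by move=> v; rewrite layer_sun_vertices in_setT cardsE card_ord.
- by rewrite big_ord1 layer_sun_edges //; congr [set _ in _ | _ == _]; apply: val_inj.
Qed.

Theorem lemma3p3 (h : nat) : 3 <= h ->
  urgdd h 0 2 h 2 /\ urgdd h 4 0 h 2.
Proof.
by move=> h_ge3; split; [apply: layer_sun_factorization | apply: one_factorization].
Qed.
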